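(* For integers $n\ge 0$ and $k$, let $C_{n,k}^{(3)}=\binom{2n}{3n+k}_3-\binom{2n}{3n+k+1}_3$ if $0\le k\le 3n$, and $C_{n,k}^{(3)}=0$ otherwise (so $C_{0,0}^{(3)}=1$). Then for all $n\ge 0$: \begin{align*} C_{n+1,0}^{(3)} &= C_{n,0}^{(3)}+C_{n,1}^{(3)}+C_{n,2}^{(3)}+C_{n,3}^{(3)},\\ C_{n+1,1}^{(3)} &= C_{n,0}^{(3)}+3C_{n,1}^{(3)}+3C_{n,2}^{(3)}+2C_{n,3}^{(3)}+C_{n,4}^{(3)},\\ C_{n+1,2}^{(3)} &= C_{n,0}^{(3)}+3C_{n,1}^{(3)}+4C_{n,2}^{(3)}+3C_{n,3}^{(3)}+2C_{n,4}^{(3)}+C_{n,5}^{(3)}, \end{align*} and, for every $k\ge 3$, $$C_{n+1,k}^{(3)} = C_{n,k-3}^{(3)}+2C_{n,k-2}^{(3)}+3C_{n,k-1}^{(3)}+4C_{n,k}^{(3)}+3C_{n,k+1}^{(3)}+2C_{n,k+2}^{(3)}+C_{n,k+3}^{(3)}.$$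
   Context: For integers $s\ge1$, $n\ge0$, the bi$^s$nomial coefficients $\binom{n}{k}_s$ are defined by $(1+x+\cdots+x^s)^n=\sum_{k\in\mathbb Z}\binom{n}{k}_s x^k$, with $\binom{n}{k}_s=0$ for $k<0$ or $k>sn$. Here $s=3$ (quadrinomial coefficients). The numbers $C_{n,k}^{(3)}$ are called the coefficients of the three-Catalan triangle. *)

From HB Require Import structures.
From mathcomp Require Import all_boot all_order all_algebra.
Set Implicit Arguments. Unset Strict Implicit. Unset Printing Implicit Defensive.
Import Order.TTheory GRing.Theory Num.Theory.
Local Open Scope ring_scope.

Definition binoms (s n : nat) (k : int) : int :=
  match k with
  | Posz m => ((\sum_(i < s.+1) 'X^i : {poly int}) ^+ n)`_m
  | Negz _ => 0
  end.

Definition cat3 (n : nat) (k : int) : int :=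
  if (0 <= k) && (k <= (3 * n)%:Z)
  then binoms 3 (2 * n) ((3 * n)%:Z + k) - binoms 3 (2 * n) ((3 * n)%:Z + k + 1)
  else 0.

From mathcomp Require Import all_boot all_order all_algebra zify ring.
Import Order.TTheory GRing.Theory Num.Theory.
Local Open Scope ring_scope.

(* Write f_N(m) for the coefficient of x^m in (1 + x + x^2 + x^3)^N and extend
   C_n(k) := f_2n(3n + k) - f_2n(3n + k + 1) to every integer k; for k >= 0 this
   is the triangle, because f_N vanishes beyond 3N by the symmetry
   f_N(m) = f_N(3N - m).  Multiplying by (1 + x + x^2 + x^3)^2, whose coefficients
   are 1, 2, 3, 4, 3, 2, 1, gives C_(n+1)(k) = sum_t c_t C_n(k + 3 - t) for every k,
   which is the case k >= 3.  For k < 3 the negative arguments are folded back by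
   the symmetry, which reads C_n(-1 - k) = - C_n(k). *)

Lemma binoms_neg s N (m : int) : m < 0 -> binoms s N m = 0.
Proof. by case: m. Qed.

Lemma binoms_succ s N (m : int) :
  binoms s N.+1 m = \sum_(j < s.+1) binoms s N (m - j%:Z).
Proof.
case: m => [m|m]; last by rewrite big1 // => j _; apply: binoms_neg; lia.
rewrite /= exprSr mulr_sumr coef_sum; apply: eq_bigr => j _.
rewrite coefMXn; case: ltnP => [lt_mj|le_jm]; first by rewrite binoms_neg //; lia.
by rewrite subzn.
Qed.

Lemma binoms_sym s N (m : int) : binoms s N m = binoms s N ((s * N)%:Z - m).
Proof.
elim: N m => [|N IH] m.
  by case: m => [[|m]|m]; rewrite muln0 /= expr0 coef1 // binoms_neg.
rewrite !binoms_succ (reindex_inj rev_ord_inj); apply: eq_bigr => j _.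
rewrite IH; congr binoms; have := ltn_ord j; rewrite /=; lia.
Qed.

Lemma binoms_gt s N (m : int) : (s * N)%:Z < m -> binoms s N m = 0.
Proof. by move=> lt_sN_m; rewrite binoms_sym binoms_neg // subr_lt0. Qed.

Lemma sum_ord4_pairs (R : comPzSemiRingType) (e : nat -> R) :
  \sum_(i < 4) \sum_(j < 4) e (i + j)%N
  = e 0%N + e 1%N *+ 2 + e 2%N *+ 3 + e 3%N *+ 4 + e 4%N *+ 3 + e 5%N *+ 2 + e 6%N.
Proof. by rewrite !big_ord_recl !big_ord0 /=; ring. Qed.

Definition binoms_diff s N (m : int) := binoms s N m - binoms s N (m + 1).

Lemma binoms_diff_succ s N (m : int) :
  binoms_diff s N.+1 m = \sum_(j < s.+1) binoms_diff s N (m - j%:Z).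
Proof.
by rewrite /binoms_diff !binoms_succ -sumrB; apply: eq_bigr => j _; rewrite addrAC.
Qed.

Lemma binoms_diff_sym s N (m : int) :
  binoms_diff s N ((s * N)%:Z - 1 - m) = - binoms_diff s N m.
Proof.
rewrite /binoms_diff opprB (binoms_sym _ _ (_ - m)) (binoms_sym _ _ (_ + 1)).
by congr (binoms _ _ _ - binoms _ _ _); ring.
Qed.

Definition cat3_ext n (k : int) := binoms_diff 3 (2 * n) ((3 * n)%:Z + k).

Lemma cat3E n (k : int) : 0 <= k -> cat3 n k = cat3_ext n k.
Proof.
move=> k_ge0; rewrite /cat3 /cat3_ext /binoms_diff k_ge0 /=.
by case: leP => // lt_3n_k; rewrite !binoms_gt //; lia.
Qed.

Lemma cat3_ext_reflect n (k : int) : cat3_ext n (-1 - k) = - cat3_ext n k.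
Proof. by rewrite /cat3_ext -binoms_diff_sym; congr binoms_diff; lia. Qed.

Lemma cat3_ext_succ n (k : int) :
  cat3_ext n.+1 k = cat3_ext n (k + 3) + cat3_ext n (k + 2) *+ 2
    + cat3_ext n (k + 1) *+ 3 + cat3_ext n k *+ 4 + cat3_ext n (k - 1) *+ 3
    + cat3_ext n (k - 2) *+ 2 + cat3_ext n (k - 3).
Proof.
have -> : cat3_ext n.+1 k =
    \sum_(i < 4) \sum_(j < 4) cat3_ext n (k + (3%:Z - (i + j)%N%:Z)).
  rewrite /cat3_ext mulnS binoms_diff_succ; apply: eq_bigr => i _.
  rewrite binoms_diff_succ; apply: eq_bigr => j _; congr binoms_diff; lia.
(* Each [3 - t] is now closed, so all summands but [t = 3] match by computation. *)
by rewrite (@sum_ord4_pairs _ (fun t => cat3_ext n (k + (3%:Z - t%:Z)))) /= subrr !addr0.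
Qed.

Theorem proposition2p2 (n : nat) :
  [/\ cat3 n.+1 0 = cat3 n 0 + cat3 n 1 + cat3 n 2 + cat3 n 3,
      cat3 n.+1 1 = cat3 n 0 + 3 * cat3 n 1 + 3 * cat3 n 2 + 2 * cat3 n 3
                    + cat3 n 4,
      cat3 n.+1 2 = cat3 n 0 + 3 * cat3 n 1 + 4 * cat3 n 2 + 3 * cat3 n 3
                    + 2 * cat3 n 4 + cat3 n 5
    & forall k : int, 3 <= k ->
      cat3 n.+1 k = cat3 n (k - 3) + 2 * cat3 n (k - 2) + 3 * cat3 n (k - 1)
                    + 4 * cat3 n k + 3 * cat3 n (k + 1) + 2 * cat3 n (k + 2)
                    + cat3 n (k + 3)].
Proof.
(* The instances below rewrite the closed arguments [0 - 3], [1 - 2], ... by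
   computation, and [ring] identifies [cat3_ext n (0 + 3)] with [cat3_ext n 3]. *)
have fold_neg := (cat3_ext_reflect n 0, cat3_ext_reflect n 1, cat3_ext_reflect n 2).
by split=> [|||k k_ge3]; (rewrite !cat3E ?cat3_ext_succ ?fold_neg; [ring | lia..]).
Qed.
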